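(* For every $n\ge2$ we have $L_n\subseteq C_n$.
   Context: $C_n$ is the set of all numbers $f$ such that there exist $n$ distinct circles in the Euclidean plane, not in general position, with every two of the circles having at least one common point, whose union has complement in the plane consisting of exactly $f$ connected components. $L_n$ is the set of all numbers of connected components of the complement in the plane of the union of $n$ distinct lines not in general position (no further condition on intersections). Circles are in general position if no two are tangent and no three pass through a common point; lines are in general position if no two are parallel and no three pass through a common point. *)

From Stdlib Require Import Reals.
Open Scope R_scope.

Definition point := (R * R)%type.

Definition dist2 (p q : point) : R :=
  (fst p - fst q) ^ 2 + (snd p - snd q) ^ 2.

Definition is_open (U : point -> Prop) : Prop :=
  forall p, U p -> exists eps, 0 < eps /\ forall q, dist2 p q < eps ^ 2 -> U q.

Definition connected (A : point -> Prop) : Prop :=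
  ~ exists U V : point -> Prop,
      is_open U /\ is_open V /\
      (forall p, A p -> U p \/ V p) /\
      (exists p, A p /\ U p) /\ (exists p, A p /\ V p) /\
      (forall p, A p -> U p -> V p -> False).

Definition same_component (S : point -> Prop) (x y : point) : Prop :=
  exists A : point -> Prop,
    (forall p, A p -> S p) /\ connected A /\ A x /\ A y.

Definition num_components (S : point -> Prop) (f : nat) : Prop :=
  exists rep : nat -> point,
    (forall i, (i < f)%nat -> S (rep i)) /\
    (forall i j, (i < f)%nat -> (j < f)%nat -> i <> j ->
        ~ same_component S (rep i) (rep j)) /\
    (forall p, S p -> exists i, (i < f)%nat /\ same_component S p (rep i)).

(* a circle: ((center_x, center_y), radius) with radius > 0 *)
Definition circle := (point * R)%type.
Definition on_circle (c : circle) (p : point) : Prop := dist2 p (fst c) = (snd c) ^ 2.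

Definition tangent_circles (c d : circle) : Prop :=
  exists p, on_circle c p /\ on_circle d p /\
    forall q, on_circle c q -> on_circle d q -> q = p.

Definition circles_general_position (n : nat) (C : nat -> circle) : Prop :=
  (forall i j, (i < n)%nat -> (j < n)%nat -> i <> j -> ~ tangent_circles (C i) (C j)) /\
  (forall i j k, (i < n)%nat -> (j < n)%nat -> (k < n)%nat ->
      i <> j -> j <> k -> i <> k ->
      ~ exists p, on_circle (C i) p /\ on_circle (C j) p /\ on_circle (C k) p).

Definition C_set (n f : nat) : Prop :=
  exists C : nat -> circle,
    (forall i, (i < n)%nat -> 0 < snd (C i)) /\
    (forall i j, (i < n)%nat -> (j < n)%nat -> i <> j -> C i <> C j) /\
    ~ circles_general_position n C /\
    (forall i j, (i < n)%nat -> (j < n)%nat ->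
        exists p, on_circle (C i) p /\ on_circle (C j) p) /\
    num_components
      (fun p => ~ exists i, (i < n)%nat /\ on_circle (C i) p) f.

(* a line {(x,y) | a x + b y = c} given by (a, b, c) with (a,b) <> (0,0) *)
Definition line := (R * R * R)%type.
Definition on_line (l : line) (p : point) : Prop :=
  let '(a, b, c) := l in a * fst p + b * snd p = c.
Definition valid_line (l : line) : Prop :=
  let '(a, b, _) := l in ~ (a = 0 /\ b = 0).
Definition same_line (l m : line) : Prop := forall p, on_line l p <-> on_line m p.

Definition parallel_lines (l m : line) : Prop :=
  ~ same_line l m /\ ~ exists p, on_line l p /\ on_line m p.

Definition lines_general_position (n : nat) (L : nat -> line) : Prop :=
  (forall i j, (i < n)%nat -> (j < n)%nat -> i <> j -> ~ parallel_lines (L i) (L j)) /\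
  (forall i j k, (i < n)%nat -> (j < n)%nat -> (k < n)%nat ->
      i <> j -> j <> k -> i <> k ->
      ~ exists p, on_line (L i) p /\ on_line (L j) p /\ on_line (L k) p).

Definition L_set (n f : nat) : Prop :=
  exists L : nat -> line,
    (forall i, (i < n)%nat -> valid_line (L i)) /\
    (forall i j, (i < n)%nat -> (j < n)%nat -> i <> j -> ~ same_line (L i) (L j)) /\
    ~ lines_general_position n L /\
    num_components
      (fun p => ~ exists i, (i < n)%nat /\ on_line (L i) p) f.

From Stdlib Require Import Reals Lra Lia Psatz Classical.
Open Scope R_scope.

(* Choose a point o on none of the lines.  Inversion about o, followed by translating o to
   the origin, sends every line to a circle through the origin, so any two of the circles
   meet; parallel lines become circles tangent at the origin and concurrent lines become
   concurrent circles, so the circles are not in general position.  Away from o and the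
   origin the inversion identifies the two complements, and removing the single point o
   does not disconnect a face of the line arrangement (a segment through o can be rerouted
   around it), so both complements have the same number of components. *)

Definition continuous2 (F : point -> R) : Prop :=
  forall p e, 0 < e -> exists d, 0 < d /\
    forall q, dist2 p q < d ^ 2 -> Rabs (F q - F p) < e.

Lemma Rabs_lt_of_sum_sq (x y d : R) : 0 < d -> x ^ 2 + y ^ 2 < d ^ 2 -> Rabs x < d.
Proof. intros Hd H. destruct (Rcase_abs x); [rewrite Rabs_left|rewrite Rabs_right]; nra. Qed.

Lemma sq_lt_of_Rabs_lt (x d : R) : Rabs x < d -> x ^ 2 < d ^ 2.
Proof. intros H. destruct (Rcase_abs x); [rewrite Rabs_left in H|rewrite Rabs_right in H]; nra. Qed.

Lemma lt_Rmin_sq (d1 d2 x : R) : 0 < d1 -> 0 < d2 -> x < Rmin d1 d2 ^ 2 ->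
  x < d1 ^ 2 /\ x < d2 ^ 2.
Proof.
  intros H1 H2 H. pose proof (Rmin_l d1 d2). pose proof (Rmin_r d1 d2).
  assert (0 < Rmin d1 d2) by (apply Rmin_glb_lt; auto). split; nra.
Qed.

Lemma continuous2_fst : continuous2 fst.
Proof.
  intros [p1 p2] e He. exists e. split; [exact He|]. intros [q1 q2] H.
  unfold dist2 in H; simpl in *. rewrite Rabs_minus_sym.
  exact (Rabs_lt_of_sum_sq _ (p2 - q2) _ He H).
Qed.

Lemma continuous2_snd : continuous2 snd.
Proof.
  intros [p1 p2] e He. exists e. split; [exact He|]. intros [q1 q2] H.
  unfold dist2 in H; simpl in *. rewrite Rabs_minus_sym.
  apply (Rabs_lt_of_sum_sq _ (p1 - q1) _ He). lra.
Qed.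

Lemma continuous2_const (c : R) : continuous2 (fun _ => c).
Proof. intros p e He. exists 1. split; [lra|]. intros. rewrite Rminus_diag, Rabs_R0. exact He. Qed.

Lemma continuous2_ext (F G : point -> R) :
  (forall p, F p = G p) -> continuous2 F -> continuous2 G.
Proof.
  intros E H p e He. destruct (H p e He) as [d [Hd H']].
  exists d; split; [exact Hd|]. intros q Hq. rewrite <- !E. auto.
Qed.

Lemma continuous2_plus (F G : point -> R) :
  continuous2 F -> continuous2 G -> continuous2 (fun p => F p + G p).
Proof.
  intros HF HG p e He.
  destruct (HF p (e / 2)) as [d1 [Hd1 H1]]; [lra|].
  destruct (HG p (e / 2)) as [d2 [Hd2 H2]]; [lra|].
  exists (Rmin d1 d2). split; [apply Rmin_glb_lt; auto|].
  intros q Hq. destruct (lt_Rmin_sq d1 d2 _ Hd1 Hd2 Hq) as [Q1 Q2].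
  specialize (H1 q Q1). specialize (H2 q Q2).
  replace (F q + G q - (F p + G p)) with ((F q - F p) + (G q - G p)) by ring.
  eapply Rle_lt_trans; [apply Rabs_triang|lra].
Qed.

Lemma continuous2_mult (F G : point -> R) :
  continuous2 F -> continuous2 G -> continuous2 (fun p => F p * G p).
Proof.
  intros HF HG p e He.
  set (a := Rabs (F p)). set (b := Rabs (G p)).
  assert (Ha : 0 <= a) by apply Rabs_pos. assert (Hb : 0 <= b) by apply Rabs_pos.
  destruct (HF p (Rmin 1 (e / (2 * (b + 1))))) as [d1 [Hd1 H1]].
  { apply Rmin_glb_lt; [lra|apply Rdiv_lt_0_compat; lra]. }
  destruct (HG p (e / (2 * (a + 1)))) as [d2 [Hd2 H2]]; [apply Rdiv_lt_0_compat; lra|].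
  exists (Rmin d1 d2). split; [apply Rmin_glb_lt; auto|].
  intros q Hq. destruct (lt_Rmin_sq d1 d2 _ Hd1 Hd2 Hq) as [Q1 Q2].
  specialize (H1 q Q1). specialize (H2 q Q2).
  pose proof (Rmin_l 1 (e / (2 * (b + 1)))). pose proof (Rmin_r 1 (e / (2 * (b + 1)))).
  assert (HFq : Rabs (F q) <= a + 1).
  { replace (F q) with (F p + (F q - F p)) by ring.
    eapply Rle_trans; [apply Rabs_triang|unfold a; lra]. }
  replace (F q * G q - F p * G p) with (F q * (G q - G p) + G p * (F q - F p)) by ring.
  eapply Rle_lt_trans; [apply Rabs_triang|]. rewrite !Rabs_mult.
  assert (E1 : Rabs (F q) * Rabs (G q - G p) < e / 2).
  { apply Rle_lt_trans with ((a + 1) * Rabs (G q - G p)).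
    - apply Rmult_le_compat_r; [apply Rabs_pos|exact HFq].
    - replace (e / 2) with ((a + 1) * (e / (2 * (a + 1)))) by (field; lra).
      apply Rmult_lt_compat_l; lra. }
  assert (E2 : Rabs (G p) * Rabs (F q - F p) <= e / 2).
  { fold b. apply Rle_trans with (b * (e / (2 * (b + 1)))).
    - apply Rmult_le_compat_l; lra.
    - replace (e / 2) with ((b + 1) * (e / (2 * (b + 1)))) by (field; lra).
      apply Rmult_le_compat_r; [left; apply Rdiv_lt_0_compat|]; lra. }
  lra.
Qed.

Lemma is_open_pos (F : point -> R) : continuous2 F -> is_open (fun p => 0 < F p).
Proof.
  intros HF p Hp. destruct (HF p (F p) Hp) as [d [Hd H]].
  exists d. split; [exact Hd|]. intros q Hq. apply H, Rabs_def2 in Hq. lra.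
Qed.

Lemma is_open_neg (F : point -> R) : continuous2 F -> is_open (fun p => F p < 0).
Proof.
  intros HF p Hp. destruct (HF p (- F p)) as [d [Hd H]]; [lra|].
  exists d. split; [exact Hd|]. intros q Hq. apply H, Rabs_def2 in Hq. lra.
Qed.

Lemma positive_near (m : nat) (F : nat -> point -> R) (o : point) :
  (forall k, continuous2 (F k)) -> (forall k, (k < m)%nat -> 0 < F k o) ->
  exists eps, 0 < eps /\
    forall q, dist2 o q < eps ^ 2 -> forall k, (k < m)%nat -> 0 < F k q.
Proof.
  induction m as [|m IH]; intros HF H.
  - exists 1. split; [lra|]. intros; lia.
  - destruct (IH HF) as [e1 [He1 H1]]; [intros; apply H; lia|].
    destruct (is_open_pos (F m) (HF m) o (H m ltac:(lia))) as [e2 [He2 H2]].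
    exists (Rmin e1 e2). split; [apply Rmin_glb_lt; auto|].
    intros q Hq k Hk. destruct (lt_Rmin_sq e1 e2 _ He1 He2 Hq) as [Q1 Q2].
    destruct (Nat.eq_dec k m) as [->|]; [apply H2; auto|apply H1; auto; lia].
Qed.

Lemma same_component_sign (S : point -> Prop) (F : point -> R) (x y : point) :
  continuous2 F -> (forall p, S p -> F p <> 0) ->
  same_component S x y -> 0 < F x * F y.
Proof.
  intros HF HS [A [HAS [HA [Ax Ay]]]].
  destruct (Rlt_le_dec 0 (F x * F y)) as [|Hxy]; [assumption|exfalso].
  assert (Hsep : exists u v, A u /\ A v /\ 0 < F u /\ F v < 0).
  { destruct (Rdichotomy _ _ (HS x (HAS x Ax))), (Rdichotomy _ _ (HS y (HAS y Ay)));
      try nra; [exists y, x|exists x, y]; repeat split; auto; lra. }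
  destruct Hsep as [u [v [Au [Av [Fu Fv]]]]].
  apply HA. exists (fun p => 0 < F p), (fun p => F p < 0).
  repeat split; [apply is_open_pos, HF|apply is_open_neg, HF| | | |].
  - intros p Ap. destruct (Rdichotomy _ _ (HS p (HAS p Ap))); [right|left]; lra.
  - exists u; auto.
  - exists v; auto.
  - intros p _ H1 H2. lra.
Qed.

Lemma connected_side (A U V : point -> Prop) (b : point) :
  connected A -> A b -> U b -> is_open U -> is_open V ->
  (forall p, A p -> U p \/ V p) -> (forall p, A p -> U p -> V p -> False) ->
  forall p, A p -> ~ V p.
Proof.
  intros HA Ab Ub oU oV cov dis p Ap Vp. apply HA.
  exists U, V. repeat split; auto; [exists b|exists p]; auto.
Qed.

Lemma connected_union (A B : point -> Prop) (b : point) :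
  connected A -> connected B -> A b -> B b -> connected (fun p => A p \/ B p).
Proof.
  intros HA HB Ab Bb [U [V [oU [oV [cov [[u [AUu Uu]] [[v [AUv Vv]] dis]]]]]]].
  assert (covA : forall p, A p -> U p \/ V p) by auto.
  assert (covB : forall p, B p -> U p \/ V p) by auto.
  assert (disA : forall p, A p -> U p -> V p -> False) by eauto.
  assert (disB : forall p, B p -> U p -> V p -> False) by eauto.
  destruct (cov b (or_introl Ab)) as [Ub|Vb].
  - destruct AUv as [Av|Bv];
      [exact (connected_side A U V b HA Ab Ub oU oV covA disA v Av Vv)
      |exact (connected_side B U V b HB Bb Ub oU oV covB disB v Bv Vv)].
  - assert (covA' : forall p, A p -> V p \/ U p) by (intros; apply or_comm; auto).
    assert (covB' : forall p, B p -> V p \/ U p) by (intros; apply or_comm; auto).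
    destruct AUu as [Au|Bu];
      [exact (connected_side A V U b HA Ab Vb oV oU covA' (fun p h x y => disA p h y x) u Au Uu)
      |exact (connected_side B V U b HB Bb Vb oV oU covB' (fun p h x y => disB p h y x) u Bu Uu)].
Qed.

Lemma same_component_trans (S : point -> Prop) (x y z : point) :
  same_component S x y -> same_component S y z -> same_component S x z.
Proof.
  intros [A [HAS [HA [Ax Ay]]]] [B [HBS [HB [By Bz]]]].
  exists (fun p => A p \/ B p). repeat split.
  - intros p [|]; auto.
  - exact (connected_union A B y HA HB Ay By).
  - left; exact Ax.
  - right; exact Bz.
Qed.

Definition path_continuous (g : R -> point) : Prop :=
  forall t, 0 <= t <= 1 -> forall e, 0 < e -> exists d, 0 < d /\
    forall u, 0 <= u <= 1 -> Rabs (u - t) < d -> dist2 (g t) (g u) < e ^ 2.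

Lemma path_continuous_pair (g1 g2 : R -> R) :
  (forall t, 0 <= t <= 1 -> continuity_pt g1 t) ->
  (forall t, 0 <= t <= 1 -> continuity_pt g2 t) ->
  path_continuous (fun t => (g1 t, g2 t)).
Proof.
  intros H1 H2 t Ht e He.
  destruct (H1 t Ht (e / 2)) as [d1 [Hd1 E1]]; [lra|].
  destruct (H2 t Ht (e / 2)) as [d2 [Hd2 E2]]; [lra|].
  exists (Rmin d1 d2). split; [apply Rmin_glb_lt; auto|].
  intros u Hu Hut. pose proof (Rmin_l d1 d2). pose proof (Rmin_r d1 d2).
  assert (close : forall (g : R -> R) d, 0 < d -> Rmin d1 d2 <= d ->
            (forall v, D_x no_cond t v /\ R_dist v t < d -> R_dist (g v) (g t) < e / 2) ->
            (g t - g u) ^ 2 < (e / 2) ^ 2).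
  { intros g d Hd Hdm Eg. apply sq_lt_of_Rabs_lt. rewrite Rabs_minus_sym.
    destruct (Req_dec u t) as [->|Hne].
    - rewrite Rminus_diag, Rabs_R0. lra.
    - apply (Eg u). repeat split; [auto|unfold R_dist; lra]. }
  unfold dist2; simpl.
  pose proof (close g1 d1 Hd1 ltac:(lra) E1). pose proof (close g2 d2 Hd2 ltac:(lra) E2).
  nra.
Qed.

(* The supremum of the times spent in [U] before [b] can lie neither in [U] nor in [V]. *)
Lemma path_not_separated (g : R -> point) (U V : point -> Prop) (a b : R) :
  path_continuous g -> is_open U -> is_open V -> 0 <= a <= b -> b <= 1 ->
  U (g a) -> V (g b) ->
  (forall t, a <= t <= b -> U (g t) \/ V (g t)) ->
  (forall t, a <= t <= b -> U (g t) -> V (g t) -> False) -> False.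
Proof.
  intros Hg oU oV Hab Hb Ua Vb cov dis.
  set (E := fun t => a <= t <= b /\ U (g t)).
  destruct (completeness E) as [s [Hub Hlub]].
  { exists b. intros t [Ht _]. lra. }
  { exists a. split; [lra|exact Ua]. }
  assert (Has : a <= s) by (apply Hub; split; [lra|exact Ua]).
  assert (Hsb : s <= b) by (apply Hlub; intros t [Ht _]; lra).
  destruct (cov s (conj Has Hsb)) as [Us|Vs].
  - destruct (oU _ Us) as [eps [Heps HU]].
    destruct (Hg s ltac:(lra) eps Heps) as [d [Hd Hc]].
    assert (Hsb' : s < b).
    { destruct Hsb as [| Es]; [assumption|subst s; exfalso; apply (dis b); auto; lra]. }
    set (t := Rmin (s + d / 2) b).
    assert (s < t) by (unfold t; apply Rmin_glb_lt; lra).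
    assert (t <= b) by apply Rmin_r. assert (t <= s + d / 2) by apply Rmin_l.
    assert (Et : E t).
    { split; [lra|]. apply HU, Hc; [lra|rewrite Rabs_right; lra]. }
    specialize (Hub t Et). lra.
  - destruct (oV _ Vs) as [eps [Heps HV]].
    destruct (Hg s ltac:(lra) eps Heps) as [d [Hd Hc]].
    assert (Has' : a < s).
    { destruct Has as [| Es]; [assumption|subst s; exfalso; apply (dis a); auto; lra]. }
    set (t := Rmax (s - d / 2) a).
    assert (t < s) by (unfold t; apply Rmax_lub_lt; lra).
    assert (a <= t) by apply Rmax_r. assert (s - d / 2 <= t) by apply Rmax_l.
    assert (Hup : is_upper_bound E t).
    { intros u [Hu Uu]. destruct (Rle_dec u t) as [|Hn]; [assumption|exfalso].
      assert (u <= s) by (apply Hub; split; auto).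
      apply (dis u); auto. apply HV, Hc; [lra|rewrite Rabs_left1; lra]. }
    specialize (Hlub t Hup). lra.
Qed.

Lemma connected_path (g1 g2 : R -> R) :
  (forall t, 0 <= t <= 1 -> continuity_pt g1 t) ->
  (forall t, 0 <= t <= 1 -> continuity_pt g2 t) ->
  connected (fun p => exists t, 0 <= t <= 1 /\ p = (g1 t, g2 t)).
Proof.
  intros H1 H2 [U [V [oU [oV [cov [[p [[t1 [T1 ->]] U1]] [[q [[t2 [T2 ->]] V2]] dis]]]]]]].
  pose proof (path_continuous_pair g1 g2 H1 H2) as Hg.
  assert (cov' : forall t, 0 <= t <= 1 -> U (g1 t, g2 t) \/ V (g1 t, g2 t)).
  { intros t Ht. apply cov. exists t; auto. }
  assert (dis' : forall t, 0 <= t <= 1 -> U (g1 t, g2 t) -> V (g1 t, g2 t) -> False).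
  { intros t Ht. apply dis. exists t; auto. }
  destruct (Rle_dec t1 t2).
  - apply (path_not_separated _ U V t1 t2 Hg oU oV); auto; try lra;
      intros t Ht; [apply cov'|apply dis']; lra.
  - apply (path_not_separated _ V U t2 t1 Hg oV oU); auto; try lra.
    + intros t Ht. apply or_comm, cov'. lra.
    + intros t Ht Vt Ut. apply (dis' t); auto; lra.
Qed.

Lemma same_component_path (S : point -> Prop) (g1 g2 : R -> R) (x y : point) :
  (forall t, 0 <= t <= 1 -> continuity_pt g1 t) ->
  (forall t, 0 <= t <= 1 -> continuity_pt g2 t) ->
  (forall t, 0 <= t <= 1 -> S (g1 t, g2 t)) ->
  (g1 0, g2 0) = x -> (g1 1, g2 1) = y -> same_component S x y.
Proof.
  intros H1 H2 HS Ex Ey.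
  exists (fun p => exists t, 0 <= t <= 1 /\ p = (g1 t, g2 t)). repeat split.
  - intros p [t [Ht ->]]. auto.
  - exact (connected_path g1 g2 H1 H2).
  - exists 0. split; [lra|auto].
  - exists 1. split; [lra|auto].
Qed.

Definition line_form (l : line) (p : point) : R :=
  let '(a, b, c) := l in a * fst p + b * snd p - c.

Lemma on_line_form (l : line) (p : point) : on_line l p <-> line_form l p = 0.
Proof. destruct l as [[a b] c]; simpl; split; lra. Qed.

Lemma continuous2_line_form (l : line) : continuous2 (line_form l).
Proof.
  destruct l as [[a b] c].
  apply continuous2_ext with
    (fun p => (fun _ => a) p * fst p + ((fun _ => b) p * snd p + (fun _ => - c) p));
    [intros; simpl; ring|].
  repeat apply continuous2_plus; try apply continuous2_mult;
    auto using continuous2_const, continuous2_fst, continuous2_snd.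
Qed.

Definition seg (x y : point) (t : R) : point :=
  (fst x + t * (fst y - fst x), snd x + t * (snd y - snd x)).

Lemma seg0 (x y : point) : seg x y 0 = x.
Proof. destruct x; unfold seg; simpl; f_equal; ring. Qed.

Lemma seg1 (x y : point) : seg x y 1 = y.
Proof. destruct y; unfold seg; simpl; f_equal; ring. Qed.

Lemma line_form_seg (l : line) (x y : point) (t : R) :
  line_form l (seg x y t) = (1 - t) * line_form l x + t * line_form l y.
Proof. destruct l as [[a b] c]; unfold seg; simpl; ring. Qed.

Definition line_complement (n : nat) (L : nat -> line) (p : point) : Prop :=
  ~ exists i, (i < n)%nat /\ on_line (L i) p.

Definition same_side (n : nat) (L : nat -> line) (x y : point) : Prop :=
  forall k, (k < n)%nat -> 0 < line_form (L k) x * line_form (L k) y.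

Lemma same_side_sym (n : nat) (L : nat -> line) (x y : point) :
  same_side n L x y -> same_side n L y x.
Proof. intros H k Hk. rewrite Rmult_comm. auto. Qed.

Lemma same_side_trans (n : nat) (L : nat -> line) (x y z : point) :
  same_side n L x y -> same_side n L y z -> same_side n L x z.
Proof.
  intros Hxy Hyz k Hk. specialize (Hxy k Hk). specialize (Hyz k Hk).
  set (X := line_form (L k) x) in *. set (Y := line_form (L k) y) in *.
  set (Z := line_form (L k) z) in *.
  assert (0 < (Y * Y) * (X * Z)) by (replace ((Y * Y) * (X * Z)) with ((X * Y) * (Y * Z)) by ring; nra).
  nra.
Qed.

Lemma same_side_seg (n : nat) (L : nat -> line) (x y : point) (t : R) :
  same_side n L x y -> 0 <= t <= 1 -> same_side n L x (seg x y t).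
Proof.
  intros H Ht k Hk. specialize (H k Hk). rewrite line_form_seg.
  set (X := line_form (L k) x) in *. set (Y := line_form (L k) y) in *.
  assert (0 < X * X) by (destruct (Rtotal_order X 0) as [h|[h|h]]; [nra|rewrite h in H; lra|nra]).
  replace (X * ((1 - t) * X + t * Y)) with ((1 - t) * (X * X) + t * (X * Y)) by ring.
  destruct (Rle_lt_dec t 0); nra.
Qed.

Lemma line_complement_same_side (n : nat) (L : nat -> line) (x y : point) :
  same_side n L x y -> line_complement n L y.
Proof.
  intros H [i [Hi Hy]]. apply on_line_form in Hy. specialize (H i Hi).
  rewrite Hy, Rmult_0_r in H. lra.
Qed.

Lemma same_component_line_complement (n : nat) (L : nat -> line) (x y : point) :
  same_component (line_complement n L) x y <-> same_side n L x y.
Proof.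
  split.
  - intros H k Hk. apply (same_component_sign (line_complement n L)); auto.
    + apply continuous2_line_form.
    + intros p Hp E. apply Hp. exists k. split; [exact Hk|apply on_line_form, E].
  - intros H. apply (same_component_path _ (fun t => fst (seg x y t)) (fun t => snd (seg x y t)));
      try (intros t _; unfold seg; simpl; reg).
    + intros t Ht. rewrite <- surjective_pairing.
      exact (line_complement_same_side n L x _ (same_side_seg n L x y t H Ht)).
    + rewrite <- surjective_pairing. apply seg0.
    + rewrite <- surjective_pairing. apply seg1.
Qed.

Definition sqnorm (q : point) : R := fst q ^ 2 + snd q ^ 2.

(* Inversion in the unit circle centred at [o], translated so that [o] goes to the origin. *)
Definition invert (o p : point) : point :=
  ((fst p - fst o) / dist2 p o, (snd p - snd o) / dist2 p o).

Definition invert_back (o q : point) : point :=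
  (fst o + fst q / sqnorm q, snd o + snd q / sqnorm q).

Lemma sum_sq_pos (x y : R) : ~ (x = 0 /\ y = 0) -> 0 < x ^ 2 + y ^ 2.
Proof.
  intros H. destruct (Req_dec x 0) as [Hx|Hx].
  - assert (Hy : y <> 0) by tauto. pose proof (Rsqr_pos_lt y Hy). unfold Rsqr in *. nra.
  - pose proof (Rsqr_pos_lt x Hx). unfold Rsqr in *. nra.
Qed.

Lemma dist2_pos (p o : point) : p <> o -> 0 < dist2 p o.
Proof.
  destruct p as [p1 p2], o as [o1 o2]. intros H. unfold dist2; simpl.
  apply sum_sq_pos. intros [h1 h2]. apply H. f_equal; lra.
Qed.

Lemma sqnorm_pos (q : point) : q <> (0, 0) -> 0 < sqnorm q.
Proof.
  destruct q as [q1 q2]. intros H. unfold sqnorm; simpl.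
  apply sum_sq_pos. intros [-> ->]. auto.
Qed.

Lemma sqnorm_invert (o p : point) : p <> o -> sqnorm (invert o p) = / dist2 p o.
Proof.
  intros H. pose proof (dist2_pos p o H). unfold sqnorm, invert; simpl.
  unfold dist2 in *. field. lra.
Qed.

Lemma invert_neq0 (o p : point) : p <> o -> invert o p <> (0, 0).
Proof.
  intros H E. pose proof (sqnorm_invert o p H) as N. rewrite E in N.
  unfold sqnorm in N; simpl in N.
  pose proof (Rinv_0_lt_compat _ (dist2_pos p o H)). lra.
Qed.

Lemma invertK (o p : point) : p <> o -> invert_back o (invert o p) = p.
Proof.
  intros H. unfold invert_back. rewrite sqnorm_invert by exact H.
  pose proof (dist2_pos p o H).
  destruct p, o; unfold invert; simpl. f_equal; field; lra.
Qed.

Lemma dist2_invert_back (o q : point) : q <> (0, 0) -> dist2 (invert_back o q) o = / sqnorm q.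
Proof.
  intros H. pose proof (sqnorm_pos q H). unfold dist2, invert_back; simpl.
  unfold sqnorm in *. field. lra.
Qed.

Lemma invert_backK (o q : point) : q <> (0, 0) -> invert o (invert_back o q) = q.
Proof.
  intros H. unfold invert. rewrite dist2_invert_back by exact H.
  pose proof (sqnorm_pos q H).
  destruct q, o; unfold invert_back; simpl. f_equal; field; lra.
Qed.

Lemma invert_back_neq (o q : point) : q <> (0, 0) -> invert_back o q <> o.
Proof.
  intros H E. pose proof (dist2_invert_back o q H) as D. rewrite E in D.
  unfold dist2 in D. rewrite !Rminus_diag in D. simpl in D.
  pose proof (Rinv_0_lt_compat _ (sqnorm_pos q H)). lra.
Qed.

(* [circle_form o l q] is [sqnorm q] times [line_form l (invert_back o q)]; completing the
   square shows its zero set is [inverted_circle o l], a circle through the origin. *)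
Definition circle_form (o : point) (l : line) (q : point) : R :=
  let '(a, b, c) := l in line_form l o * sqnorm q + a * fst q + b * snd q.

Definition inverted_circle (o : point) (l : line) : circle :=
  let '(a, b, c) := l in
  ((- a / (2 * line_form l o), - b / (2 * line_form l o)),
   sqrt (a ^ 2 + b ^ 2) / (2 * Rabs (line_form l o))).

Lemma line_form_invert_back (o : point) (l : line) (q : point) : q <> (0, 0) ->
  line_form l (invert_back o q) = circle_form o l q / sqnorm q.
Proof.
  intros H. pose proof (sqnorm_pos q H). destruct l as [[a b] c].
  unfold circle_form, invert_back; simpl. field. lra.
Qed.

Lemma circle_form_invert (o : point) (l : line) (p : point) : p <> o ->
  circle_form o l (invert o p) = line_form l p / dist2 p o.
Proof.
  intros H. destruct l as [[a b] c]. unfold circle_form. rewrite sqnorm_invert by exact H.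
  pose proof (dist2_pos p o H). unfold invert; simpl. field. lra.
Qed.

Lemma circle_form_origin (o : point) (l : line) : circle_form o l (0, 0) = 0.
Proof. destruct l as [[a b] c]. unfold circle_form, sqnorm; simpl. ring. Qed.

Lemma continuous2_circle_form (o : point) (l : line) : continuous2 (circle_form o l).
Proof.
  destruct l as [[a b] c].
  apply continuous2_ext with
    (fun p => (fun _ => line_form (a, b, c) o) p * (fst p * fst p + snd p * snd p)
              + ((fun _ => a) p * fst p + (fun _ => b) p * snd p));
    [intros; unfold circle_form, sqnorm; simpl; ring|].
  repeat (apply continuous2_plus || apply continuous2_mult);
    auto using continuous2_const, continuous2_fst, continuous2_snd.
Qed.

Lemma on_inverted_circle (o : point) (l : line) (q : point) :
  line_form l o <> 0 -> valid_line l ->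
  on_circle (inverted_circle o l) q <-> circle_form o l q = 0.
Proof.
  destruct l as [[a b] c]. intros Hd Hv. simpl in Hv. pose proof (sum_sq_pos a b Hv) as Hp.
  unfold on_circle, inverted_circle, circle_form.
  set (d := line_form (a, b, c) o) in *. unfold dist2, sqnorm. cbn [fst snd].
  assert (Hr : (sqrt (a ^ 2 + b ^ 2) / (2 * Rabs d)) ^ 2 = (a ^ 2 + b ^ 2) / (4 * d ^ 2)).
  { unfold Rdiv. rewrite Rpow_mult_distr, pow2_sqrt by lra.
    rewrite pow_inv, Rpow_mult_distr, pow2_abs. field. exact Hd. }
  rewrite Hr.
  assert (E : (fst q - - a / (2 * d)) ^ 2 + (snd q - - b / (2 * d)) ^ 2
              - (a ^ 2 + b ^ 2) / (4 * d ^ 2)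
              = (d * (fst q ^ 2 + snd q ^ 2) + a * fst q + b * snd q) / d)
    by (field; exact Hd).
  split; intro H.
  - assert (X : (d * (fst q ^ 2 + snd q ^ 2) + a * fst q + b * snd q) / d = 0) by lra.
    unfold Rdiv in X. apply Rmult_integral in X. destruct X as [X|X]; [exact X|].
    exfalso. exact (Rinv_neq_0_compat _ Hd X).
  - rewrite H in E. unfold Rdiv in E. rewrite Rmult_0_l in E. lra.
Qed.

Lemma inverted_circle_radius_pos (o : point) (l : line) :
  line_form l o <> 0 -> valid_line l -> 0 < snd (inverted_circle o l).
Proof.
  destruct l as [[a b] c]. intros Hd Hv. simpl in Hv. pose proof (sum_sq_pos a b Hv).
  unfold inverted_circle. cbn [snd]. apply Rdiv_lt_0_compat.
  - apply sqrt_lt_R0. lra.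
  - pose proof (Rabs_pos_lt _ Hd). lra.
Qed.

Definition orient (x y o : point) : R :=
  (fst y - fst x) * (snd o - snd x) - (snd y - snd x) * (fst o - fst x).

Lemma seg_neq_of_orient (x y o : point) : orient x y o <> 0 -> forall t, seg x y t <> o.
Proof.
  intros H t E. apply H. rewrite <- E. destruct x, y. unfold orient, seg; simpl. ring.
Qed.

Lemma orient_detour (x y : point) (t d : R) :
  let o := seg x y t in
  let z := (fst o - d * (snd y - snd x), snd o + d * (fst y - fst x)) in
  orient x z o = - (d * t * dist2 y x) /\ orient z y o = - (d * (1 - t) * dist2 y x).
Proof. destruct x, y. unfold orient, seg, dist2; simpl. split; ring. Qed.

Section Inversion.

Variable n : nat.
Variable L : nat -> line.
Variable o : point.
Hypothesis off_lines : forall k, (k < n)%nat -> line_form (L k) o <> 0.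
Hypothesis valid : forall k, (k < n)%nat -> valid_line (L k).

Definition circle_complement (q : point) : Prop :=
  ~ exists i, (i < n)%nat /\ on_circle (inverted_circle o (L i)) q.

Lemma on_inverted_circle_origin (i : nat) : (i < n)%nat ->
  on_circle (inverted_circle o (L i)) (0, 0).
Proof. intros Hi. apply on_inverted_circle; auto. apply circle_form_origin. Qed.

Lemma on_inverted_circleE (i : nat) (q : point) : (i < n)%nat -> q <> (0, 0) ->
  on_circle (inverted_circle o (L i)) q <-> on_line (L i) (invert_back o q).
Proof.
  intros Hi Hq. rewrite on_inverted_circle, on_line_form, line_form_invert_back by auto.
  pose proof (sqnorm_pos q Hq). split; intro E.
  - rewrite E. unfold Rdiv. ring.
  - replace (circle_form o (L i) q) with (circle_form o (L i) q / sqnorm q * sqnorm q)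
      by (field; lra).
    rewrite E. ring.
Qed.

Lemma circle_complement_neq0 (q : point) : (0 < n)%nat -> circle_complement q -> q <> (0, 0).
Proof. intros Hn Hc E. apply Hc. exists 0%nat. subst. auto using on_inverted_circle_origin. Qed.

Lemma circle_complementE (q : point) : q <> (0, 0) ->
  circle_complement q <-> line_complement n L (invert_back o q).
Proof.
  intros Hq. unfold circle_complement, line_complement.
  split; intros H [i [Hi Hl]]; apply H; exists i; split; auto;
    apply (on_inverted_circleE i q Hi Hq); auto.
Qed.

Lemma circle_complement_invert (p : point) : p <> o ->
  line_complement n L p -> circle_complement (invert o p).
Proof.
  intros Hp H. apply circle_complementE; [apply invert_neq0; auto|].
  rewrite invertK; auto.
Qed.

Lemma circle_form_neq0 (q : point) (k : nat) : (k < n)%nat ->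
  circle_complement q -> circle_form o (L k) q <> 0.
Proof. intros Hk Hq E. apply Hq. exists k. split; [exact Hk|]. apply on_inverted_circle; auto. Qed.

Lemma same_component_circle_complement_same_side (x y : point) : x <> o -> y <> o ->
  same_component circle_complement (invert o x) (invert o y) -> same_side n L x y.
Proof.
  intros Hx Hy Hs k Hk.
  assert (Hsign := same_component_sign _ _ _ _ (continuous2_circle_form o (L k))
                     (fun q => circle_form_neq0 q k Hk) Hs).
  rewrite !circle_form_invert in Hsign by auto.
  pose proof (dist2_pos _ _ Hx). pose proof (dist2_pos _ _ Hy).
  replace (line_form (L k) x * line_form (L k) y) with
    ((line_form (L k) x / dist2 x o * (line_form (L k) y / dist2 y o)) * (dist2 x o * dist2 y o))
    by (field; lra).
  apply Rmult_lt_0_compat; nra.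
Qed.

Lemma same_component_invert_seg (x y : point) :
  (forall t, 0 <= t <= 1 -> seg x y t <> o) -> same_side n L x y ->
  same_component circle_complement (invert o x) (invert o y).
Proof.
  intros Hs Hc.
  apply (same_component_path _ (fun t => fst (invert o (seg x y t)))
                               (fun t => snd (invert o (seg x y t)))).
  - intros t Ht. pose proof (dist2_pos _ _ (Hs t Ht)).
    unfold invert, seg, dist2 in *; cbn [fst snd] in *. reg; lra.
  - intros t Ht. pose proof (dist2_pos _ _ (Hs t Ht)).
    unfold invert, seg, dist2 in *; cbn [fst snd] in *. reg; lra.
  - intros t Ht. rewrite <- surjective_pairing.
    apply circle_complement_invert; [auto|].
    exact (line_complement_same_side n L x _ (same_side_seg n L x y t Hc Ht)).
  - rewrite <- surjective_pairing, seg0. reflexivity.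
  - rewrite <- surjective_pairing, seg1. reflexivity.
Qed.

(* A segment through [o] is replaced by two segments through a point [z] near [o] that
   lies in the same face; neither of them passes through [o]. *)
Lemma same_component_invert (x y : point) : x <> o -> y <> o -> same_side n L x y ->
  same_component circle_complement (invert o x) (invert o y).
Proof.
  intros Hx Hy Hxy.
  destruct (classic (exists t, 0 <= t <= 1 /\ seg x y t = o)) as [[t [Ht Eo]] | Hno];
    [|apply same_component_invert_seg; eauto].
  assert (Hxo : same_side n L x o) by (rewrite <- Eo; apply same_side_seg; auto).
  destruct (positive_near n (fun k q => line_form (L k) x * line_form (L k) q) o)
    as [eps [Heps Hnear]]; auto.
  { intros k. apply continuous2_mult; [apply continuous2_const|apply continuous2_line_form]. }
  set (D := dist2 y x).
  assert (HD : 0 < D).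
  { apply dist2_pos. intros Eyx. apply Hx. rewrite <- Eo, Eyx. destruct x.
    unfold seg; simpl; f_equal; ring. }
  set (d := eps / (D + 1)).
  assert (Hd : 0 < d) by (apply Rdiv_lt_0_compat; lra).
  assert (HdD : d * (D + 1) = eps) by (unfold d; field; lra).
  destruct (orient_detour x y t d) as [Ox Oy]. rewrite Eo in Ox, Oy.
  set (z := (fst o - d * (snd y - snd x), snd o + d * (fst y - fst x))) in Ox, Oy.
  assert (Hz : dist2 o z = d ^ 2 * D) by (unfold z, D, dist2; simpl; ring).
  assert (Hxz : same_side n L x z) by (intros k Hk; apply (Hnear z); [nra|exact Hk]).
  assert (Ht0 : t <> 0) by (intros ->; apply Hx; rewrite <- Eo; symmetry; apply seg0).
  assert (Ht1 : t <> 1) by (intros ->; apply Hy; rewrite <- Eo; symmetry; apply seg1).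
  assert (HdD0 : 0 < d * D) by (apply Rmult_lt_0_compat; assumption).
  apply same_component_trans with (invert o z).
  - apply same_component_invert_seg; [|exact Hxz].
    intros s _. apply seg_neq_of_orient. rewrite Ox. intros E. apply Ht0. fold D in E. nra.
  - apply same_component_invert_seg;
      [|exact (same_side_trans n L z x y (same_side_sym n L x z Hxz) Hxy)].
    intros s _. apply seg_neq_of_orient. rewrite Oy. intros E. apply Ht1. fold D in E. nra.
Qed.

Lemma same_component_circle_complement (x y : point) : x <> o -> y <> o ->
  same_component circle_complement (invert o x) (invert o y) <->
  same_component (line_complement n L) x y.
Proof.
  intros Hx Hy. rewrite same_component_line_complement. split.
  - apply same_component_circle_complement_same_side; auto.
  - apply same_component_invert; auto.
Qed.

Lemma inverted_circle_inj (i j : nat) : (i < n)%nat -> (j < n)%nat ->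
  inverted_circle o (L i) = inverted_circle o (L j) -> same_line (L i) (L j).
Proof.
  assert (H : forall k k' p, (k < n)%nat -> (k' < n)%nat ->
            inverted_circle o (L k) = inverted_circle o (L k') ->
            on_line (L k) p -> on_line (L k') p).
  { intros k k' p Hk Hk' E Hp.
    assert (Hpo : p <> o) by (intros ->; apply (off_lines k Hk), on_line_form, Hp).
    rewrite <- (invertK o p Hpo). apply on_inverted_circleE; [auto|apply invert_neq0; auto|].
    rewrite <- E. apply on_inverted_circleE; [auto|apply invert_neq0; auto|].
    rewrite invertK; auto. }
  intros Hi Hj E p. split; apply H; auto.
Qed.

(* Parallel lines become circles tangent at the origin, concurrent lines concurrent circles. *)
Lemma inverted_circles_not_general_position :
  ~ lines_general_position n L ->
  ~ circles_general_position n (fun i => inverted_circle o (L i)).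
Proof.
  intros Hngp [Htan Htriple]. apply Hngp. split.
  - intros i j Hi Hj Hij [Hsame Hmeet]. apply (Htan i j Hi Hj Hij). exists (0, 0).
    repeat split; auto using on_inverted_circle_origin.
    intros q Qi Qj. apply NNPP. intros Hq. apply Hmeet.
    exists (invert_back o q). split; apply on_inverted_circleE; auto.
  - intros i j k Hi Hj Hk Hij Hjk Hik [p [Pi [Pj Pk]]].
    apply (Htriple i j k Hi Hj Hk Hij Hjk Hik).
    assert (Hpo : p <> o) by (intros ->; apply (off_lines i Hi), on_line_form, Pi).
    exists (invert o p).
    repeat split; apply on_inverted_circleE; auto using invert_neq0; rewrite invertK; auto.
Qed.

End Inversion.

Definition component_reps (S : point -> Prop) (f : nat) (rep : nat -> point) : Prop :=
  (forall i, (i < f)%nat -> S (rep i)) /\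
  (forall i j, (i < f)%nat -> (j < f)%nat -> i <> j -> ~ same_component S (rep i) (rep j)) /\
  (forall p, S p -> exists i, (i < f)%nat /\ same_component S p (rep i)).

Lemma component_reps_transfer (S T D : point -> Prop) (g h : point -> point)
    (f : nat) (rep : nat -> point) :
  (forall p, D p -> S p -> T (g p)) ->
  (forall q, T q -> S (h q) /\ D (h q) /\ g (h q) = q) ->
  (forall x y, D x -> D y -> same_component T (g x) (g y) <-> same_component S x y) ->
  (forall i, (i < f)%nat -> D (rep i)) ->
  component_reps S f rep -> component_reps T f (fun i => g (rep i)).
Proof.
  intros Hg Hh Hcomp HD [Hin [Hdist Hcov]]. repeat split.
  - intros i Hi. auto.
  - intros i j Hi Hj Hij Hs. apply (Hdist i j Hi Hj Hij). apply Hcomp; auto.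
  - intros q Hq. destruct (Hh q Hq) as [Sh [Dh Eh]].
    destruct (Hcov _ Sh) as [i [Hi Hs]]. exists i. split; [exact Hi|].
    rewrite <- Eh. apply Hcomp; auto.
Qed.

Lemma finite_upper_bound (m : nat) (v : nat -> R) :
  exists y, forall k, (k < m)%nat -> v k < y.
Proof.
  induction m as [|m [y Hy]].
  - exists 0. intros; lia.
  - exists (Rmax y (v m + 1)). intros k Hk.
    destruct (Nat.eq_dec k m) as [->|].
    + eapply Rlt_le_trans; [|apply Rmax_r]. lra.
    + eapply Rlt_le_trans; [|apply Rmax_l]. apply Hy; lia.
Qed.

(* Take [x] to the right of every vertical line, then [y] above every other line at
   abscissa [x] and above all the given points. *)
Lemma exists_point_off_lines (n m : nat) (L : nat -> line) (r : nat -> point) :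
  (forall k, (k < n)%nat -> valid_line (L k)) ->
  exists o, (forall k, (k < n)%nat -> line_form (L k) o <> 0) /\
            (forall i, (i < m)%nat -> r i <> o).
Proof.
  intros Hval.
  destruct (finite_upper_bound n (fun k => let '(a, b, c) := L k in c / a)) as [x Hx].
  destruct (finite_upper_bound n (fun k => let '(a, b, c) := L k in (c - a * x) / b))
    as [y1 Hy1].
  destruct (finite_upper_bound m (fun i => snd (r i))) as [y2 Hy2].
  exists (x, Rmax y1 y2). pose proof (Rmax_l y1 y2). pose proof (Rmax_r y1 y2). split.
  - intros k Hk E. specialize (Hval k Hk). specialize (Hx k Hk). specialize (Hy1 k Hk).
    destruct (L k) as [[a b] c]; simpl in *.
    destruct (Req_dec b 0) as [->|Hb].
    + assert (c / a = x) by (field_simplify_eq; [lra|tauto]). lra.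
    + assert ((c - a * x) / b = Rmax y1 y2) by (field_simplify_eq; [lra|exact Hb]). lra.
  - intros i Hi E. specialize (Hy2 i Hi). rewrite E in Hy2. simpl in Hy2. lra.
Qed.

Theorem lemma4 : forall n f : nat, (2 <= n)%nat -> L_set n f -> C_set n f.
Proof.
  intros n f Hn [L [Hval [Hdist [Hngp [rep Hrep]]]]].
  destruct (exists_point_off_lines n f L rep Hval) as [o [Hoff Hrep_o]].
  exists (fun i => inverted_circle o (L i)). repeat split.
  - intros i Hi. apply inverted_circle_radius_pos; auto.
  - intros i j Hi Hj Hij E. apply (Hdist i j Hi Hj Hij).
    exact (inverted_circle_inj n L o Hoff Hval i j Hi Hj E).
  - exact (inverted_circles_not_general_position n L o Hoff Hval Hngp).
  - intros i j Hi Hj. exists (0, 0). split; apply (on_inverted_circle_origin n L o Hoff Hval); auto.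
  - exists (fun i => invert o (rep i)).
    apply (component_reps_transfer (line_complement n L) (circle_complement n L o)
             (fun p => p <> o) (invert o) (invert_back o)); auto.
    + exact (circle_complement_invert n L o Hoff Hval).
    + intros q Hq. assert (Hq0 : q <> (0, 0))
        by (apply (circle_complement_neq0 n L o Hoff Hval); auto; lia).
      repeat split.
      * apply (circle_complementE n L o Hoff Hval); auto.
      * apply invert_back_neq; exact Hq0.
      * apply invert_backK; exact Hq0.
    + exact (same_component_circle_complement n L o Hoff Hval).
Qed.
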